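(* Let $N = n+1\ge 3$ be odd and let $\boldsymbol{\lambda} = (\lambda_1,\dots,\lambda_N)\in\Lambda_N$. The upward-pointing inner normal vector of the lifted simplex $\Omega_\omega(G^{\mathbf{0}}_{\boldsymbol{\lambda}}) = \operatorname{conv}\{(\mathbf{a},\omega(\mathbf{a}))\mid \mathbf{a}\text{ a vertex of } G^{\mathbf{0}}_{\boldsymbol{\lambda}}\}\subset\mathbb{R}^{N}$ (normalized to have last coordinate $1$) is $\mathbf{x} = (x_1,\dots,x_N)$ where \[ x_k = \begin{cases} \sum_{i=1}^k \lambda_i & \text{if } k < N,\\ 1 & \text{if } k = N.\end{cases} \]
   Context: $\mathbf{e}_1,\dots,\mathbf{e}_n$ is the standard basis of $\mathbb{R}^n$, with $\mathbf{e}_0=\mathbf{e}_N=\mathbf{0}$. For odd $N$, $\Lambda_N = \bigcup_{j=1}^N\Lambda_{j,N}$ with $\Lambda_{j,N} = \{(\lambda_1,\dots,\lambda_N)\mid\lambda_j=0,\ \lambda_i\in\{-1,1\}\text{ for }i\neq j,\ \sum_i\lambda_i=0\}$, and for $\boldsymbol{\lambda}\in\Lambda_{j,N}$, $G^{\mathbf{0}}_{\boldsymbol{\lambda}} = \operatorname{conv}(\{\mathbf{0}\}\cup\{\lambda_i(\mathbf{e}_{i-1}-\mathbf{e}_i)\mid 1\le i\le N,\ i\ne j\})$. The height function is $\omega(\mathbf{0})=0$ and $\omega(\mathbf{a})=1$ for $\mathbf{a}\ne\mathbf{0}$. These simplices are the lower facets of the lifted adjacency polytope $\operatorname{conv}\{(\mathbf{a},\omega(\mathbf{a}))\mid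 \mathbf{a}\in\{\mathbf{0}\}\cup\{\mathbf{e}_i-\mathbf{e}_j\mid\{i,j\}\text{ an edge of the cycle } C_N\}\}$, and ''upward-pointing inner normal'' refers to this lifted polytope (upward-pointing meaning positive last coordinate). *)

From mathcomp Require Import all_boot all_order all_algebra.
Set Implicit Arguments. Unset Strict Implicit. Unset Printing Implicit Defensive.
Import Order.TTheory GRing.Theory Num.Theory.
Local Open Scope ring_scope.

Section Defs.
Variable R : realFieldType.
Variable n : nat.   (* ambient dimension; N = n.+1 *)

(* Standard basis e_k of R^n indexed by k = 1..n (nat);
   e_0 = e_N = 0 (indeed e_k = 0 for k = 0 or k > n). *)
Definition ebasis (k : nat) : 'rV[R]_n :=
  \row_(m < n) (if m.+1 == k then 1 else 0).

Definition omega (a : 'rV[R]_n) : R := if a == 0 then 0 else 1.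

(* lifted point (a, h) in R^(n+1) = R^N; last coordinate h *)
Definition liftpt (a : 'rV[R]_n) (h : R) : 'rV[R]_n.+1 :=
  \row_(k < n.+1) (if unlift ord_max k is Some k' then a 0 k' else h).

Definition liftw (a : 'rV[R]_n) : 'rV[R]_n.+1 := liftpt a (omega a).

Definition dotv (y p : 'rV[R]_n.+1) : R := \sum_(k < n.+1) y 0 k * p 0 k.

(* lambda is given as a function on indices 1..N (values elsewhere are
   irrelevant). lambda \in Lambda_{j,N} with N = n.+1. *)
Definition in_Lambda_j (j : nat) (lam : nat -> R) : Prop :=
  [/\ (1 <= j <= n.+1)%N, lam j = 0,
      (forall i, (1 <= i <= n.+1)%N -> i <> j -> lam i = 1 \/ lam i = -1)
    & \sum_(1 <= i < n.+2) lam i = 0].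

Definition G0verts (j : nat) (lam : nat -> R) : seq 'rV[R]_n :=
  0 :: [seq lam i *: (ebasis i.-1 - ebasis i) | i <- iota 1 n.+1 & i != j].

(* points of the adjacency polytope of the cycle C_N on vertices 1..N:
   0 and e_i - e_j for every (oriented) edge {i, j} *)
Definition adjpts : seq 'rV[R]_n :=
  0 :: flatten [seq [:: ebasis i - ebasis (i %% n.+1).+1;
                       ebasis (i %% n.+1).+1 - ebasis i] | i <- iota 1 n.+1].

Definition is_inner_normal (P F : seq 'rV[R]_n.+1) (y : 'rV[R]_n.+1) : Prop :=
  exists c : R, (forall f, f \in F -> dotv y f = c) /\
                (forall p, p \in P -> c <= dotv y p).

Definition xnormal (lam : nat -> R) : 'rV[R]_n.+1 :=
  \row_(k < n.+1) (if (k < n)%N then \sum_(1 <= i < k.+2) lam i else 1).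

End Defs.

(** With last coordinate 1, the functional <y, .> takes the value
    <y', a> + omega(a) at the lifted point (a, omega(a)), where y' is y
    without its last coordinate.  The vertex 0 of G^0_lambda forces the
    level c = 0, and each other vertex lambda_i (e_(i-1) - e_i) then forces
    y'_i - y'_(i-1) = lambda_i, for all i <> j.  Since y'_0 = y'_N = 0 and
    the lambda_i sum to 0, the steps telescope and the missing step i = j is
    forced as well, so y' consists of the partial sums of lambda.
    Conversely the partial-sum vector vanishes on the face and takes values
    -lambda_(i+1) (indices mod N) on the points e_i - e_(i+1) of the
    adjacency polytope, which are >= -1; as omega = 1 off the origin, every
    lifted point lies above level 0. *)
From mathcomp Require Import all_boot all_order all_algebra.
From mathcomp Require Import lra zify.
Set Implicit Arguments. Unset Strict Implicit. Unset Printing Implicit Defensive.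
Import Order.TTheory GRing.Theory Num.Theory.
Local Open Scope ring_scope.

Lemma eq_steps_but_one (V : zmodType) (g : nat -> V) (m j : nat) :
    g m = g 0%N -> (forall i, (i < m)%N -> i != j -> g i.+1 = g i) ->
  forall k, (k <= m)%N -> g k = g 0%N.
Proof.
move=> gm steps.
have step i : (i < m)%N -> g i.+1 = g i.
  move=> lt_im; have [eq_ij|] := eqVneq i j; last exact: steps.
  rewrite {}eq_ij in lt_im *.
  have : \sum_(0 <= i < m) (g i.+1 - g i) = 0 by rewrite telescope_sumr // gm subrr.
  have jm : j \in index_iota 0 m by rewrite mem_index_iota lt_im.
  rewrite (bigD1_seq j jm (iota_uniq _ _)) /= big1_seq => [/eqP|k /andP[kj]].
    by rewrite addr0 subr_eq0 => /eqP.
  by rewrite mem_index_iota => /= lt_km; rewrite steps // subrr.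
by elim=> [//|k IHk] lt_km; rewrite step // IHk // ltnW.
Qed.

Section Lifting.
Variables (R : realFieldType) (n : nat).

Definition base_dot (y : 'rV[R]_n.+1) (a : 'rV[R]_n) : R :=
  \sum_(m < n) y 0 (lift ord_max m) * a 0 m.

(* Indexed like [ebasis]: [coord y k] is y_k for 1 <= k <= n, and 0 for k = 0 or k > n. *)
Definition coord (y : 'rV[R]_n.+1) (k : nat) : R :=
  if k is k'.+1 then (if (k' < n)%N then y 0 (inord k') else 0) else 0.

Lemma dotv_liftw y a : dotv y (liftw a) = base_dot y a + y 0 ord_max * omega a.
Proof.
rewrite /dotv big_ord_recr /=; congr (_ + _); last first.
  by rewrite /liftw /liftpt mxE unlift_none.
apply: eq_bigr => m _; rewrite /liftw /liftpt mxE.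
have -> : widen_ord (leqnSn n) m = lift ord_max m.
  by apply: val_inj; exact: (esym (lift_max m)).
by rewrite liftK.
Qed.

Lemma base_dotB y a b : base_dot y (a - b) = base_dot y a - base_dot y b.
Proof. by rewrite /base_dot -sumrB; apply: eq_bigr => m _; rewrite !mxE mulrBr. Qed.

Lemma base_dotZ y c a : base_dot y (c *: a) = c * base_dot y a.
Proof. by rewrite /base_dot mulr_sumr; apply: eq_bigr => m _; rewrite !mxE mulrCA. Qed.

Lemma base_dot0 y : base_dot y 0 = 0.
Proof. by rewrite -(subrr 0) base_dotB subrr. Qed.

Lemma base_dot_ebasis y k : base_dot y (ebasis R n k) = coord y k.
Proof.
rewrite /base_dot /coord; case: k => [|k].
  by rewrite big1 // => m _; rewrite mxE mulr0.
case: ifPn => [lt_kn|ge_kn].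
  rewrite (bigD1 (Ordinal lt_kn)) //= mxE eqxx mulr1 big1 ?addr0 => [|m ne_mk].
    congr (y 0 _); apply: val_inj; rewrite /= inordK; last exact: ltnW.
    exact: (lift_max (Ordinal lt_kn)).
  by rewrite mxE eqSS ifN ?mulr0.
rewrite big1 // => m _; rewrite mxE eqSS; case: eqP => [eq_mk|]; last by rewrite mulr0.
by move: (ltn_ord m); rewrite eq_mk (negPf ge_kn).
Qed.

Lemma coord_inj (y z : 'rV[R]_n.+1) : y 0 ord_max = z 0 ord_max ->
  (forall k, (k <= n)%N -> coord y k = coord z k) -> y = z.
Proof.
move=> yz_max yz; apply/rowP => k; have [lt_kn|] := ltnP k n.
  by have := yz k.+1 lt_kn; rewrite /coord lt_kn inord_val.
move=> ge_kn; suff -> : k = ord_max by [].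
by apply: val_inj; move: (ltn_ord k) ge_kn => /=; lia.
Qed.

Lemma omega0 : omega (0 : 'rV[R]_n) = 0.
Proof. by rewrite /omega eqxx. Qed.

Lemma omega_base_dot_neq0 y a : base_dot y a != 0 -> omega a = 1.
Proof. by rewrite /omega; have [->|//] := eqVneq a 0; rewrite base_dot0 eqxx. Qed.

Lemma base_dot_omega_ge0 y a : `|base_dot y a| <= 1 -> 0 <= base_dot y a + omega a.
Proof.
rewrite /omega; have [->|_] := eqVneq a 0; first by rewrite base_dot0 addr0.
by rewrite ler_norml => /andP[? _]; lra.
Qed.

End Lifting.

Section Normal.
Variables (R : realFieldType) (n j : nat) (lam : nat -> R).
Hypothesis lamP : in_Lambda_j n j lam.

Definition Gvert (i : nat) : 'rV[R]_n := lam i *: (ebasis R n i.-1 - ebasis R n i).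

Local Notation x := (xnormal n lam).
Local Notation P := [seq liftw a | a <- adjpts R n].
Local Notation F := [seq liftw a | a <- G0verts n j lam].

Lemma lam_sign i : (1 <= i <= n.+1)%N -> i != j -> lam i = 1 \/ lam i = -1.
Proof. by case: lamP => _ _ lam_pm _ /lam_pm + /eqP. Qed.

Lemma normr_lam_le1 i : (1 <= i <= n.+1)%N -> `|lam i| <= 1.
Proof.
move=> i_range; have [->|ne_ij] := eqVneq i j.
  by case: lamP => _ -> _ _; rewrite normr0.
by case: (lam_sign i_range ne_ij) => ->; rewrite ?normrN normr1.
Qed.

Lemma mem_G0verts a :
  a \in G0verts n j lam -> a = 0 \/ exists2 i, (1 <= i <= n.+1)%N & i != j /\ a = Gvert i.
Proof.
rewrite inE => /orP[/eqP ->|/mapP[i]]; first by left.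
by rewrite mem_filter mem_iota add1n ltnS => /andP[ne_ij i_range] ->; right; exists i.
Qed.

Lemma Gvert_in_G0verts i : (1 <= i <= n.+1)%N -> i != j -> Gvert i \in G0verts n j lam.
Proof.
move=> i_range ne_ij; rewrite inE; apply/orP; right.
by apply: (map_f Gvert); rewrite mem_filter ne_ij mem_iota add1n ltnS.
Qed.

Lemma base_dot_Gvert y i : base_dot y (Gvert i) = lam i * (coord y i.-1 - coord y i).
Proof. by rewrite base_dotZ base_dotB !base_dot_ebasis. Qed.

Lemma coord_xnormal k : (k <= n.+1)%N -> coord x k = \sum_(1 <= i < k.+1) lam i.
Proof.
case: k => [_|k le_kn]; first by rewrite big_geq.
rewrite /coord; have [lt_kn|ge_kn] := ltnP k n.
  by rewrite mxE inordK ?lt_kn //; exact: ltnW.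
by case: lamP => _ _ _; have -> : k = n by lia.
Qed.

Lemma coord_xnormal_step i : (1 <= i <= n.+1)%N -> coord x i - coord x i.-1 = lam i.
Proof.
case: i => // i /andP[_ le_in]; rewrite !coord_xnormal ?(ltnW le_in) //.
by rewrite big_nat_recr //= addrAC subrr add0r.
Qed.

Lemma base_dot_xnormal_Gvert i : (1 <= i <= n.+1)%N -> i != j -> base_dot x (Gvert i) = -1.
Proof.
move=> i_range ne_ij; rewrite base_dot_Gvert -opprB coord_xnormal_step //.
by case: (lam_sign i_range ne_ij) => ->; lra.
Qed.

Lemma omega_Gvert i : (1 <= i <= n.+1)%N -> i != j -> omega (Gvert i) = 1.
Proof.
move=> i_range ne_ij; apply: (@omega_base_dot_neq0 _ _ x).
by rewrite base_dot_xnormal_Gvert ?oppr_eq0 ?oner_eq0.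
Qed.

Lemma coord_xnormal_adjacent i : (1 <= i <= n.+1)%N ->
  `|coord x i - coord x (i %% n.+1).+1| <= 1.
Proof.
case/andP=> ge1_i; rewrite leq_eqVlt => /orP[/eqP ->|lt_iN].
  have -> : coord x n.+1 = 0 by rewrite /coord ltnn.
  by rewrite modnn sub0r normrN coord_xnormal // big_nat1 normr_lam_le1.
have iS_range : (1 <= i.+1 <= n.+1)%N := lt_iN.
by rewrite modn_small // -normrN opprB coord_xnormal_step // normr_lam_le1.
Qed.

Lemma normr_base_dot_xnormal_adjpts a : a \in adjpts R n -> `|base_dot x a| <= 1.
Proof.
rewrite inE => /orP[/eqP ->|]; first by rewrite base_dot0 normr0.
case/flatten_mapP => i; rewrite mem_iota add1n ltnS => i_range.
rewrite !inE => /orP[] /eqP ->; rewrite base_dotB !base_dot_ebasis;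
  [|rewrite distrC]; exact: coord_xnormal_adjacent.
Qed.

Lemma xnormal_is_inner_normal : is_inner_normal P F x.
Proof.
have x_max : x 0 ord_max = 1 by rewrite mxE ltnn.
exists 0; split=> _ /mapP[a a_in ->]; rewrite dotv_liftw x_max mul1r.
  case: (mem_G0verts a_in) => [->|[i i_range [ne_ij ->]]].
    by rewrite base_dot0 omega0 addr0.
  by rewrite base_dot_xnormal_Gvert // omega_Gvert // addNr.
exact/base_dot_omega_ge0/normr_base_dot_xnormal_adjpts.
Qed.

Lemma inner_normal_coord_step (y : 'rV[R]_n.+1) i :
    y 0 ord_max = 1 -> is_inner_normal P F y -> (1 <= i <= n.+1)%N -> i != j ->
  coord y i - coord y i.-1 = lam i.
Proof.
move=> y_max [c [onF _]] i_range ne_ij.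
have liftF a : a \in G0verts n j lam -> base_dot y a + omega a = c.
  by move=> a_in; rewrite -(onF _ (map_f _ a_in)) dotv_liftw y_max mul1r.
have c0 : c = 0 by rewrite -(liftF 0) ?mem_head // base_dot0 omega0 addr0.
have := liftF _ (Gvert_in_G0verts i_range ne_ij).
by rewrite omega_Gvert // c0 base_dot_Gvert; case: (lam_sign i_range ne_ij) => ->; lra.
Qed.

End Normal.

Theorem corollary5p8 (R : realFieldType) (n : nat) (j : nat) (lam : nat -> R) :
  (2 <= n)%N -> odd n.+1 -> in_Lambda_j n j lam ->
  forall y : 'rV[R]_n.+1, y 0 ord_max = 1 ->
    (is_inner_normal [seq liftw a | a <- adjpts R n]
                     [seq liftw a | a <- G0verts n j lam] y
     <-> y = xnormal n lam).
Proof.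
move=> _ _ lamP y y_max; split=> [y_normal|->]; last exact: xnormal_is_inner_normal.
apply: coord_inj; first by rewrite y_max mxE ltnn.
pose g k := coord y k - coord (xnormal n lam) k.
have g_step i : (i < n.+1)%N -> i != j.-1 -> g i.+1 = g i.
  move=> lt_iN ne_ij; have iS_range : (1 <= i.+1 <= n.+1)%N := lt_iN.
  have ne_iSj : i.+1 != j by apply: contraNneq ne_ij => <-.
  have := inner_normal_coord_step lamP y_max y_normal iS_range ne_iSj.
  by rewrite -(coord_xnormal_step lamP iS_range) /g /= => ?; lra.
have gN : g n.+1 = g 0%N by rewrite /g /coord ltnn.
have g0 k : (k <= n.+1)%N -> g k = 0.
  by move/(eq_steps_but_one gN g_step) ->; rewrite /g subrr.
by move=> k /leqW /g0 /eqP; rewrite subr_eq0 => /eqP.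
Qed.
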